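(* Let $\ell$ be an odd prime. Then every $\underline{\mathbb Z/\ell}$-module is a direct sum of copies of $H$ and $S_\Theta$. Moreover, every $\underline{\mathbb Z/\ell}$-module is projective and every short exact sequence of $\underline{\mathbb Z/\ell}$-modules splits.
   Context: A $C_2$-Mackey functor $M$ consists of abelian groups $M_\Theta,M_\bullet$ with homomorphisms $t\colon M_\Theta\to M_\Theta$, $p^*\colon M_\bullet\to M_\Theta$, $p_*\colon M_\Theta\to M_\bullet$ satisfying $tp^*=p^*$, $p_*t=p_*$, $t^2=1$, $p^*p_*=1+t$. A $\underline{\mathbb Z/\ell}$-module (module over the constant Mackey ring $\underline{\mathbb Z/\ell}$) is exactly a Mackey functor with $\ell M_\Theta=0$, $\ell M_\bullet=0$ and $p_*p^*=2$. Here $H=\underline{\mathbb Z/\ell}$ is the module with $H_\Theta=H_\bullet=\mathbb Z/\ell$, $p^*=t=\mathrm{id}$, $p_*=2$, and $S_\Theta$ is the module with $(S_\Theta)_\Theta=\mathbb Z/\ell$, $t=-1$, and $(S_\Theta)_\bullet=0$. *)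

From mathcomp Require Import all_boot all_order all_algebra.
Set Implicit Arguments. Unset Strict Implicit. Unset Printing Implicit Defensive.
Import GRing.Theory.
Local Open Scope ring_scope.

(* A C2-Mackey functor: abelian groups M_Theta (MT), M_bullet (MB) with
   additive maps t : MT -> MT, p^* : MB -> MT (pu), p_* : MT -> MB (pl). *)
Record mackey := Mackey {
  MT : zmodType;
  MB : zmodType;
  mt : MT -> MT;
  pu : MB -> MT;
  pl : MT -> MB;
  mt_add : forall x y, mt (x + y) = mt x + mt y;
  pu_add : forall x y, pu (x + y) = pu x + pu y;
  pl_add : forall x y, pl (x + y) = pl x + pl y;
  mt_pu : forall y, mt (pu y) = pu y;
  pl_mt : forall x, pl (mt x) = pl x;
  mt_invol : forall x, mt (mt x) = x;
  pu_pl : forall x, pu (pl x) = x + mt x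
}.

Record mor (M N : mackey) := Mor {
  morT : MT M -> MT N;
  morB : MB M -> MB N;
  morT_add : forall x y, morT (x + y) = morT x + morT y;
  morB_add : forall x y, morB (x + y) = morB x + morB y;
  morT_mt : forall x, morT (mt x) = mt (morT x);
  morT_pu : forall y, morT (pu y) = pu (morB y);
  morB_pl : forall x, morB (pl x) = pl (morT x)
}.

Definition is_Zl_module (l : nat) (M : mackey) : Prop :=
  [/\ forall x : MT M, x *+ l = 0,
      forall y : MB M, y *+ l = 0 &
      forall y : MB M, pl (pu y) = y *+ 2].

Section HS.
Variable l : nat.

Definition H_mackey : mackey.
Proof.
refine (@Mackey 'Z_l 'Z_l id id (fun x => x *+ 2) _ _ _ _ _ _ _);
  by [ | move=> x y; rewrite mulrnDl | move=> x; rewrite mulr2n].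
Defined.

Definition S_mackey : mackey.
Proof.
refine (@Mackey 'Z_l 'I_1 (fun x => - x) (fun _ => 0) (fun _ => 0)
          _ _ _ _ _ _ _);
  by [ | move=> x y; rewrite opprD | move=> y; rewrite oppr0
       | move=> x y; rewrite addr0 | move=> x; rewrite opprK
       | move=> x; rewrite subrr].
Defined.
End HS.

Definition finsupp (I : eqType) (V : zmodType) (a : I -> V) (s : seq I) :=
  uniq s /\ forall i, a i != 0 -> i \in s.

(* M is the (internal) direct sum of the images of the families
   f_i : H -> M (i in I) and g_j : S_Theta -> M (j in J), i.e. the induced
   map from the external direct sum (finitely supported families) is a
   bijection at both levels. *)
Definition is_dsum_H_S (l : nat) (M : mackey) (I J : eqType)
    (f : I -> mor (H_mackey l) M) (g : J -> mor (S_mackey l) M) : Prop :=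
  [/\ (forall x : MT M, exists (a : I -> 'Z_l) (s : seq I) (b : J -> 'Z_l) (r : seq J),
         [/\ finsupp a s, finsupp b r &
             x = \sum_(i <- s) morT (f i) (a i) + \sum_(j <- r) morT (g j) (b j)]),
      (forall (a : I -> 'Z_l) (s : seq I) (b : J -> 'Z_l) (r : seq J),
         finsupp a s -> finsupp b r ->
         \sum_(i <- s) morT (f i) (a i) + \sum_(j <- r) morT (g j) (b j) = 0 ->
         (forall i, a i = 0) /\ (forall j, b j = 0)),
      (* level bullet: surjective ((S_Theta)_bullet = 0) *)
      (forall y : MB M, exists (a : I -> 'Z_l) (s : seq I),
         finsupp a s /\ y = \sum_(i <- s) morB (f i) (a i)) &
      (forall (a : I -> 'Z_l) (s : seq I),
         finsupp a s -> \sum_(i <- s) morB (f i) (a i) = 0 -> forall i, a i = 0)].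

Definition mor_surj (A B : mackey) (e : mor A B) : Prop :=
  (forall y : MT B, exists x, morT e x = y) /\ (forall y : MB B, exists x, morB e x = y).

Definition mor_inj (A B : mackey) (e : mor A B) : Prop :=
  (forall x y, morT e x = morT e y -> x = y) /\ (forall x y, morB e x = morB e y -> x = y).

Definition is_projective (l : nat) (P : mackey) : Prop :=
  forall (A B : mackey), is_Zl_module l A -> is_Zl_module l B ->
  forall (e : mor A B) (f : mor P B), mor_surj e ->
  exists g : mor P A,
    (forall x, morT e (morT g x) = morT f x) /\ (forall y, morB e (morB g y) = morB f y).

Definition short_exact (A B C : mackey) (i : mor A B) (p : mor B C) : Prop :=
  [/\ mor_inj i, mor_surj p,
      (forall b : MT B, morT p b = 0 <-> exists a, morT i a = b) &
      (forall b : MB B, morB p b = 0 <-> exists a, morB i a = b)].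

Definition ses_splits (A B C : mackey) (i : mor A B) (p : mor B C) : Prop :=
  exists s : mor C B,
    (forall c, morT p (morT s c) = c) /\ (forall c, morB p (morB s c) = c).

(* Since l is odd, 2 is invertible in Z/l and every x in M_Theta splits as
   x = p^*(p_*(x)/2) + (x - t x)/2, where the second summand lies in the
   (-1)-eigenspace of t, which p_* kills.  A basis of the F_l-vector space
   M_bullet therefore gives the copies of H, and a basis of the (-1)-eigenspace
   the copies of S_Theta.  Projectivity reduces to that of vector spaces: lift
   the bullet level along the epimorphism, lift the Theta level arbitrarily and
   project the lift of the skew part back onto the (-1)-eigenspace.  A short
   exact sequence splits because its quotient is projective. *)

From HB Require Import structures.
From mathcomp Require Import all_boot all_order all_algebra.
From mathcomp Require Import boolp classical_sets.
Set Implicit Arguments. Unset Strict Implicit. Unset Printing Implicit Defensive.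
Import GRing.Theory.
Local Open Scope ring_scope.

Lemma add_zmod_morphism (U V : zmodType) (f : U -> V) :
  {morph f : x y / x + y} -> zmod_morphism f.
Proof.
move=> fD x y; have f0 : f 0 = 0 by apply: (@addrI _ (f 0)); rewrite -fD !addr0.
by apply: (@addrI _ (f y)); rewrite -fD addrC subrK addrC subrK.
Qed.

HB.instance Definition _ (M : mackey) :=
  GRing.isZmodMorphism.Build _ _ (@mt M) (add_zmod_morphism (@mt_add M)).
HB.instance Definition _ (M : mackey) :=
  GRing.isZmodMorphism.Build _ _ (@pu M) (add_zmod_morphism (@pu_add M)).
HB.instance Definition _ (M : mackey) :=
  GRing.isZmodMorphism.Build _ _ (@pl M) (add_zmod_morphism (@pl_add M)).
HB.instance Definition _ (M N : mackey) (e : mor M N) :=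
  GRing.isZmodMorphism.Build _ _ (morT e) (add_zmod_morphism (morT_add e)).
HB.instance Definition _ (M N : mackey) (e : mor M N) :=
  GRing.isZmodMorphism.Build _ _ (morB e) (add_zmod_morphism (morB_add e)).

Definition torsion (l : nat) (V : zmodType) := forall v : V, v *+ l = 0.

Section TorsionScaling.
Variables (l : nat) (l_gt1 : (1 < l)%N) (V : zmodType) (V_tors : torsion l V).
Implicit Types (v : V) (a b : 'Z_l).

Lemma mulrn_modn v n : v *+ (n %% l) = v *+ n.
Proof. by rewrite {2}(divn_eq n l) mulrnDr mulrnA V_tors add0r. Qed.

Lemma mulrn_natZp v n : v *+ (n%:R : 'Z_l) = v *+ n.
Proof. by rewrite val_Zp_nat // mulrn_modn. Qed.

Lemma mulrnZpD v a b : v *+ (a + b)%R = v *+ a + v *+ b.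
Proof.
have -> : a + b = (a + b)%N%:R :> 'Z_l by rewrite natrD !natr_Zp.
by rewrite mulrn_natZp mulrnDr.
Qed.

Lemma mulrnZpM v a b : v *+ (a * b)%R = v *+ a *+ b.
Proof.
have -> : a * b = (a * b)%N%:R :> 'Z_l by rewrite natrM !natr_Zp.
by rewrite mulrn_natZp mulrnA.
Qed.

Lemma mulrnZpN v a : v *+ (- a)%R = - (v *+ a).
Proof. by apply/eqP; rewrite -addr_eq0 -mulrnZpD addNr. Qed.

End TorsionScaling.

Section Combinations.
Variables (l : nat) (I : eqType) (V : zmodType).
Implicit Types (v : I -> V) (a b : I -> 'Z_l) (s u : seq I).

Definition comb (W : zmodType) (w : I -> W) a s := \sum_(i <- s) w i *+ a i.

Lemma finsupp_widen a s u :
  finsupp a s -> uniq u -> {subset s <= u} -> finsupp a u.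
Proof. by move=> [_ supp_a] uniq_u sub_su; split=> // i /supp_a /sub_su. Qed.

Lemma finsuppD a b s :
  finsupp a s -> finsupp b s -> finsupp (fun i => a i + b i) s.
Proof.
move=> [uniq_s supp_a] [_ supp_b]; split=> // i; apply: contraR => s'i.
have /eqP-> : a i == 0 by apply: contraR s'i => /supp_a.
by have /eqP-> : b i == 0 by apply: contraR s'i => /supp_b.
Qed.

Lemma finsuppN a s : finsupp a s -> finsupp (fun i => - a i) s.
Proof. by move=> [uniq_s supp_a]; split=> // i; rewrite oppr_eq0 => /supp_a. Qed.

Lemma comb_widen (W : zmodType) (w : I -> W) a s u :
  finsupp a s -> uniq u -> {subset s <= u} -> comb w a s = comb w a u.
Proof.
move=> [uniq_s supp_a] uniq_u sub_su.
rewrite /comb [RHS](bigID (mem s)) /= [X in _ + X]big1 ?addr0; last first.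
  move=> i s'i; have /eqP-> : a i == 0 by apply: contraNT s'i => /supp_a.
  exact: mulr0n.
rewrite -[RHS]big_filter; apply: perm_big; apply: uniq_perm; rewrite ?filter_uniq // => i.
by rewrite mem_filter andb_idr //; apply: sub_su.
Qed.

Lemma finsupp_common a b s u : finsupp a s -> finsupp b u -> exists r,
  [/\ finsupp a r, finsupp b r, {subset r <= s ++ u} &
       forall (W : zmodType) (w : I -> W), comb w a s = comb w a r /\ comb w b u = comb w b r].
Proof.
move=> supp_a supp_b; exists (undup (s ++ u)); have uniq_r := undup_uniq (s ++ u).
have sub_sr : {subset s <= undup (s ++ u)} by move=> i si; rewrite mem_undup mem_cat si.
have sub_ur : {subset u <= undup (s ++ u)} by move=> i ui; rewrite mem_undup mem_cat ui orbT.
split=> [||i|W w].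
- exact: finsupp_widen supp_a uniq_r sub_sr.
- exact: finsupp_widen supp_b uniq_r sub_ur.
- by rewrite mem_undup.
- by split; apply: comb_widen.
Qed.

Lemma comb_morph (U : zmodType) (f : {additive V -> U}) v a s :
  f (comb v a s) = comb (f \o v) a s.
Proof. by rewrite raddf_sum; apply: eq_bigr => i _; rewrite raddfMn. Qed.

Hypotheses (l_gt1 : (1 < l)%N) (V_tors : torsion l V).

Lemma combD v a b s : comb v (fun i => a i + b i) s = comb v a s + comb v b s.
Proof. by rewrite /comb -big_split; apply: eq_bigr => i _; rewrite mulrnZpD. Qed.

Lemma combN v a s : comb v (fun i => - a i) s = - comb v a s.
Proof. by rewrite /comb -sumrN; apply: eq_bigr => i _; rewrite mulrnZpN. Qed.

Lemma combB v a b s : comb v (fun i => a i - b i) s = comb v a s - comb v b s.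
Proof. by rewrite combD combN. Qed.

Lemma combMr v a k s : comb v (fun i => a i * k) s = comb v a s *+ k.
Proof. by rewrite /comb -sumrMnl; apply: eq_bigr => i _; rewrite mulrnZpM. Qed.

End Combinations.

Section Basis.
Local Open Scope classical_set_scope.
Variables (l : nat) (l_prime : prime l) (V : zmodType) (V_tors : torsion l V).
Let l_gt1 := prime_gt1 l_prime.
Implicit Types (B : set V) (v : V) (a b : V -> 'Z_l) (s r : seq V).

Definition free B := forall a s, finsupp a s -> {in s, forall x, B x} ->
  comb id a s = 0 -> forall x, a x = 0.

Definition in_span B v := exists a s,
  [/\ finsupp a s, {in s, forall x, B x} & v = comb id a s].

Lemma in_span_self B v : B v -> in_span B v.
Proof.
move=> Bv; exists (fun x => (x == v)%:R), [:: v]; split.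
- by split=> // x; rewrite mem_seq1; apply: contraR => /negbTE->.
- by move=> x; rewrite mem_seq1 => /eqP->.
- by rewrite /comb big_seq1 eqxx mulrn_natZp.
Qed.

Lemma chain_bound (F : set (set V)) s : total_on F subset ->
  {in s, forall x, (\bigcup_(B in F) B) x} ->
  s = [::] \/ exists2 B, F B & {in s, forall x, B x}.
Proof.
move=> chainF; elim: s => [|x s IHs] sub_xs; first by left.
right; have [X FX Xx] := sub_xs x (mem_head _ _).
have [->|[Y FY sub_s]] := IHs (fun y sy => sub_xs y (mem_behead (s := x :: s) sy)).
  by exists X => // y; rewrite mem_seq1 => /eqP->.
have [XY|YX] := chainF X Y FX FY.
  by exists Y => // y; rewrite inE => /orP[/eqP->|/sub_s]; [apply: XY|].
by exists X => // y; rewrite inE => /orP[/eqP->|/sub_s/YX].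
Qed.

Lemma free_bigcup (F : set (set V)) : (forall B, F B -> free B) ->
  total_on F subset -> free (\bigcup_(B in F) B).
Proof.
move=> freeF chainF a s supp_a sub_s comb0.
have [s0|[B FB sub_B]] := chain_bound chainF sub_s; last exact: freeF supp_a sub_B comb0.
by move=> x; apply/eqP; apply: contraT => /supp_a.2; rewrite s0.
Qed.

Lemma unit_Zp_prime (k : 'Z_l) : k != 0 -> k \is a GRing.unit.
Proof.
move=> k_neq0; rewrite -[k]natr_Zp unitZpE // prime_coprime //.
by apply: contra k_neq0 => /eqP l_dvd_k; rewrite -[k]natr_Zp -(Zp_nat_mod l_gt1 k) l_dvd_k.
Qed.

Lemma free_setU1 B v : free B -> ~ in_span B v -> free (B `|` [set v]).
Proof.
move=> freeB spanN a s [uniq_s supp_a] sub_s comb0.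
pose s' := [seq x <- s | x != v].
pose a' x := if x == v then 0 else a x.
have supp_a' : finsupp a' s'.
  split=> [|x]; first exact: filter_uniq.
  by rewrite /a' mem_filter; case: ifP => [_|_ /supp_a ->]; rewrite ?eqxx.
have sub_s' : {in s', forall x, B x}.
  by move=> x; rewrite mem_filter => /andP[/eqP x_neq_v /sub_s[]].
have comb_split : comb id a s = v *+ a v + comb id a' s'.
  rewrite (comb_widen id (u := v :: s') (conj uniq_s supp_a)) //=; last first.
  - by move=> x s_x; rewrite inE mem_filter s_x andbT orbN.
  - by rewrite mem_filter eqxx filter_uniq.
  rewrite /comb big_cons; congr (_ + _); apply: eq_big_seq => x.
  by rewrite mem_filter /a' => /andP[/negbTE->].
have [av0|av_neq0] := eqVneq (a v) 0.
  have a'0 := freeB a' s' supp_a' sub_s'.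
  move: comb0; rewrite comb_split av0 add0r => /a'0 {}a'0 x.
  by have := a'0 x; rewrite /a'; case: eqP => [->|].
have [k avk] : exists k, a v * k = 1 by exists (a v)^-1; rewrite mulrV ?unit_Zp_prime.
have a'_out x : x \notin s' -> a' x = 0.
  by move=> s'x; apply/eqP; apply: contraNT s'x => /supp_a'.2.
have comb_a' : comb id a' s' = - (v *+ a v).
  by apply/eqP; rewrite -addr_eq0 addrC -comb_split comb0.
case: spanN; exists (fun x => - (a' x * k)), s'; split=> //.
  split=> [|x]; first exact: supp_a'.1.
  by apply: contraR => /a'_out->; rewrite mul0r oppr0 eqxx.
by rewrite combN // combMr // comb_a' mulNrn opprK -mulrnZpM // avk (mulrn_natZp _ _ v 1).
Qed.

Lemma exists_basis (P : set V) :
  exists B, [/\ B `<=` P, free B & forall v, P v -> in_span B v].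
Proof.
pose Q B := B `<=` P /\ free B.
have /Zorn_bigcup[B [[BP freeB] maxB]] : forall F, F `<=` Q ->
    total_on F subset -> Q (\bigcup_(B in F) B).
  move=> F FQ chainF; split; first by move=> x [B /FQ[BP _] /BP].
  by apply: free_bigcup => // B /FQ[].
exists B; split=> // v Pv; apply: contrapT => spanN.
apply: (maxB (B `|` [set v])); last first.
  by split; [rewrite subUset; split=> // x -> | exact: free_setU1].
split=> [x Bx|sub_vB]; first by left.
by apply: spanN; apply: in_span_self; apply: sub_vB; right.
Qed.

Lemma free_comb_eq (U : zmodType) (phi : V -> U) B a b s r : free B ->
  finsupp a s -> finsupp b r -> {in s, forall x, B x} -> {in r, forall x, B x} ->
  comb id a s = comb id b r -> comb phi a s = comb phi b r.
Proof.
move=> freeB supp_a supp_b sub_s sub_r eq_ab.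
have [u [supp_au supp_bu sub_u comb_u]] := finsupp_common supp_a supp_b.
have coef_eq x : a x = b x.
  apply/eqP; rewrite -subr_eq0; apply/eqP; apply: (freeB (fun x => a x - b x) u).
  - exact: finsuppD supp_au (finsuppN supp_bu).
  - by move=> y /sub_u; rewrite mem_cat => /orP[/sub_s|/sub_r].
  - by rewrite combB //; have [<- <-] := comb_u _ id; rewrite eq_ab subrr.
by have [-> ->] := comb_u _ phi; apply: eq_bigr => x _; rewrite coef_eq.
Qed.

Lemma free_val B : free B -> forall (a : B -> 'Z_l) (r : seq B),
  finsupp a r -> comb val a r = 0 -> forall i, a i = 0.
Proof.
move=> freeB a r [uniq_r supp_a] comb0.
pose c x := if insub x is Some i then a i else 0.
have supp_c : finsupp c (map val r).
  split=> [|x]; first by rewrite map_inj_uniq //; apply: val_inj.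
  by rewrite /c; case: insubP => // i _ <- /supp_a; apply: map_f.
have sub_B : {in map val r, forall x, B x} by move=> _ /mapP[i _ ->]; apply: set_valP.
have comb_c : comb id c (map val r) = comb val a r.
  by rewrite /comb big_map; apply: eq_bigr => i _; rewrite /c valK.
move=> i; have := freeB c _ supp_c sub_B _ (val i); rewrite comb_c => /(_ comb0).
by rewrite /c valK.
Qed.

Lemma in_span_val B v : in_span B v ->
  exists (a : B -> 'Z_l) (r : seq B), finsupp a r /\ v = comb val a r.
Proof.
move=> [c [s [[uniq_s supp_c] sub_B ->]]].
exists (c \o val), (pmap insub s); split.
  split=> [|i /supp_c]; first exact: pmap_sub_uniq.
  by rewrite mem_pmap_sub.
rewrite /comb -(big_map val xpredT (fun x => x *+ c x)) (pmap_filter (@insubK _ _ _)).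
rewrite (eq_in_filter (a2 := xpredT)) ?filter_predT // => x /sub_B Bx.
by case: insubP => // /negP[]; apply/mem_set.
Qed.

End Basis.

Section AdditiveLift.
Variables (l : nat) (l_prime : prime l) (V A W : zmodType).
Hypotheses (V_tors : torsion l V) (A_tors : torsion l A).
Let l_gt1 := prime_gt1 l_prime.
Implicit Types (a : V -> 'Z_l) (s : seq V).

Lemma exists_additive_lift (e : {additive A -> W}) (f : {additive V -> W}) :
  (forall v, exists x, e x = f v) -> exists g : {additive V -> A}, forall v, e (g v) = f v.
Proof.
move=> /choice[phi phiP].
have [B [_ freeB spanB]] := exists_basis l_prime V_tors setT.
have /choice[rep repP] : forall v, exists r : (V -> 'Z_l) * seq V,
    [/\ finsupp r.1 r.2, {in r.2, forall x, B x} & v = comb id r.1 r.2].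
  by move=> v; have [a [s span_v]] := spanB v I; exists (a, s).
pose g v := comb phi (rep v).1 (rep v).2.
have g_comb a s : finsupp a s -> {in s, forall x, B x} -> g (comb id a s) = comb phi a s.
  move=> supp_a sub_s; have [supp_r sub_r comb_r] := repP (comb id a s).
  exact: free_comb_eq freeB supp_r supp_a sub_r sub_s (esym comb_r).
have gD : {morph g : x y / x + y}.
  move=> x y; have [supp_x sub_x comb_x] := repP x; have [supp_y sub_y comb_y] := repP y.
  have [u [supp_xu supp_yu sub_u comb_u]] := finsupp_common supp_x supp_y.
  have [idx idy] := comb_u _ id; have [phix phiy] := comb_u _ phi.
  have supp_u := finsuppD supp_xu supp_yu.
  have sub_uB : {in u, forall z, B z}.
    by move=> z /sub_u; rewrite mem_cat => /orP[/sub_x|/sub_y].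
  by rewrite {1}comb_x {1}comb_y idx idy -combD // g_comb // combD // /g phix phiy.
pose g_additive := GRing.isZmodMorphism.Build _ _ g (add_zmod_morphism gD).
exists (HB.pack_for {additive V -> A} g g_additive) => v /=.
have [_ _ {2}->] := repP v.
by rewrite /g comb_morph comb_morph; apply: eq_bigr => x _; rewrite /= phiP.
Qed.

End AdditiveLift.

Definition inv2 (l : nat) := l.+1./2.

Section HalfScaling.
Variables (l : nat) (l_odd : odd l) (V : zmodType) (V_tors : torsion l V).

Lemma mulrn2K (v : V) : v *+ 2 *+ inv2 l = v.
Proof.
have := odd_double_half l.+1; rewrite /= l_odd add0n -muln2 => inv2_l.
by rewrite -mulrnA mulnC /inv2 inv2_l mulrS V_tors addr0.
Qed.

Lemma mulrnK2 (v : V) : v *+ inv2 l *+ 2 = v.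
Proof. by rewrite -mulrnA mulnC mulrnA mulrn2K. Qed.

Lemma mulrn2_eq0 (v : V) : v *+ 2 = 0 -> v = 0.
Proof. by move=> v2; rewrite -(mulrn2K v) v2 mul0rn. Qed.

End HalfScaling.

Section Skew.
Variables (l : nat) (M : mackey).
Implicit Types (x : MT M) (y : MB M).

Definition skew x := (x - mt x) *+ inv2 l.

Lemma skew_zmod_morphism : zmod_morphism skew.
Proof.
move=> x y; rewrite /skew -mulrnBl raddfB /=; congr (_ *+ _).
by rewrite !opprB addrACA [RHS]addrACA [in RHS](addrC (- mt x)).
Qed.

Lemma mt_skew x : mt (skew x) = - skew x.
Proof. by rewrite raddfMn /= raddfB /= mt_invol -mulNrn opprB. Qed.

Lemma skew_mt x : skew (mt x) = - skew x.
Proof. by rewrite /skew mt_invol -mulNrn opprB. Qed.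

Lemma skew_pu y : skew (pu y) = 0.
Proof. by rewrite /skew mt_pu subrr mul0rn. Qed.

Lemma pl_skew x : pl (skew x) = 0.
Proof. by rewrite raddfMn /= raddfB /= pl_mt subrr mul0rn. Qed.

Hypotheses (l_odd : odd l) (MT_tors : torsion l (MT M)).

Lemma skew_id x : mt x = - x -> skew x = x.
Proof. by move=> mt_x; rewrite /skew mt_x opprK -mulr2n mulrn2K. Qed.

Lemma skewK x : skew (skew x) = skew x.
Proof. exact/skew_id/mt_skew. Qed.

Lemma pu_pl_skew x : pu (pl x *+ inv2 l) + skew x = x.
Proof.
by rewrite raddfMn /= pu_pl /skew -mulrnDl addrACA subrr addr0 -mulr2n mulrn2K.
Qed.

End Skew.

HB.instance Definition _ (l : nat) (M : mackey) :=
  GRing.isZmodMorphism.Build _ _ (@skew l M) (@skew_zmod_morphism l M).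

Lemma morT_skew l (M N : mackey) (e : mor M N) (x : MT M) :
  morT e (skew l x) = skew l (morT e x).
Proof. by rewrite raddfMn /= raddfB /= morT_mt. Qed.

Section ZlModule.
Variables (l : nat) (l_prime : prime l) (l_odd : odd l).
Variables (M : mackey) (M_mod : is_Zl_module l M).
Let l_gt1 := prime_gt1 l_prime.
Let MT_tors : torsion l (MT M) := let: And3 t _ _ := M_mod in t.
Let MB_tors : torsion l (MB M) := let: And3 _ t _ := M_mod in t.
Let pl_pu : forall y : MB M, pl (pu y) = y *+ 2 := let: And3 _ _ e := M_mod in e.

Definition H_mor (y : MB M) : mor (H_mackey l) M.
Proof.
refine (@Mor (H_mackey l) M (fun k => pu y *+ k) (fun k => y *+ k) _ _ _ _ _).
- by move=> a b; rewrite mulrnZpD.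
- by move=> a b; rewrite mulrnZpD.
- by move=> k; rewrite raddfMn /= mt_pu.
- by move=> k; rewrite raddfMn.
- move=> k; change (y *+ (k *+ 2)%R = pl (pu y *+ k)).
  by rewrite mulr2n mulrnZpD // raddfMn /= pl_pu -mulrnA mulnC mulrnA mulr2n.
Defined.

Definition S_mor (x : MT M) (x_skew : mt x = - x) : mor (S_mackey l) M.
Proof.
refine (@Mor (S_mackey l) M (fun k => x *+ k) (fun _ => 0) _ _ _ _ _).
- by move=> a b; rewrite mulrnZpD.
- by move=> a b; rewrite addr0.
- move=> k; change (x *+ (- k)%R = mt (x *+ k)).
  by rewrite mulrnZpN // [RHS]raddfMn /= x_skew mulNrn.
- by move=> k; rewrite [RHS]raddf0.
- by move=> k; rewrite raddfMn /= -(skew_id l_odd MT_tors x_skew) pl_skew mul0rn.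
Defined.

Theorem Zl_module_dsum : exists (I J : eqType)
  (f : I -> mor (H_mackey l) M) (g : J -> mor (S_mackey l) M), is_dsum_H_S f g.
Proof.
have [BB [_ freeBB spanBB]] := exists_basis l_prime MB_tors setT.
have [BW [skewBW freeBW spanBW]] := exists_basis l_prime MT_tors (fun x => mt x = - x).
pose g j := S_mor (skewBW _ (set_valP j)).
exists BB, BW, (fun i => H_mor (val i)), g.
have sumH (a : BB -> 'Z_l) s : \sum_(i <- s) morT (H_mor (val i)) (a i) = pu (comb val a s).
  by rewrite comb_morph.
have sumS (b : BW -> 'Z_l) r : \sum_(j <- r) morT (g j) (b j) = comb val b r by [].
split.
- move=> x; have [a [s [supp_a comb_a]]] := in_span_val (spanBB (pl x *+ inv2 l) I).
  have [b [r [supp_b comb_b]]] := in_span_val (spanBW (skew l x) (mt_skew l x)).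
  exists a, s, b, r; split=> //.
  by rewrite sumH sumS -comb_a -comb_b pu_pl_skew.
- move=> a s b r supp_a supp_b; rewrite sumH sumS => sum0.
  have skew_comb : skew l (comb val b r) = comb val b r.
    rewrite comb_morph; apply: eq_bigr => j _.
    by rewrite /= skew_id //; apply: skewBW (set_valP j).
  (* skew kills the H-summands and fixes the S-summands *)
  have := congr1 (@skew l M) sum0; rewrite raddfD /= skew_pu add0r skew_comb raddf0 => comb_b0.
  move: sum0; rewrite comb_b0 addr0 => /(congr1 (@pl M)); rewrite pl_pu raddf0.
  move=> /(mulrn2_eq0 l_odd MB_tors) comb_a0.
  by split; [apply: free_val freeBB _ _ supp_a comb_a0 | apply: free_val freeBW _ _ supp_b comb_b0].
- by move=> y; have [a [s [supp_a ->]]] := in_span_val (spanBB y I); exists a, s.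
- by move=> a s supp_a; apply: free_val freeBB _ _ supp_a.
Qed.

Theorem Zl_module_projective : is_projective l M.
Proof.
move=> A B [AT_tors AB_tors A_pl_pu] _ e f [surjT surjB].
have [gB gB_lift] := exists_additive_lift l_prime MB_tors AB_tors (fun y => surjB (morB f y)).
have [g0 g0_lift] := exists_additive_lift l_prime MT_tors AT_tors (fun x => surjT (morT f x)).
(* g0 need not commute with t; sandwiching it between skews restores this. *)
pose gT x := pu (gB (pl x *+ inv2 l)) + skew l (g0 (skew l x)).
have gT_add : {morph gT : x y / x + y}.
  by move=> x y; rewrite /gT !(raddfD, mulrnDl) /= addrACA.
have gT_mt x : gT (mt x) = mt (gT x).
  by rewrite /gT pl_mt skew_mt !raddfN /= [RHS]raddfD /= mt_pu mt_skew.
have gT_pu y : gT (pu y) = pu (gB y).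
  by rewrite /gT pl_pu mulrn2K // skew_pu !raddf0 addr0.
have gB_pl x : gB (pl x) = pl (gT x).
  by rewrite /gT raddfD /= A_pl_pu pl_skew addr0 -raddfMn /= mulrnK2.
exists (Mor gT_add (raddfD gB) gT_mt gT_pu gB_pl); split=> x /=; last exact: gB_lift.
rewrite /gT raddfD /= morT_pu gB_lift morT_skew g0_lift -morT_skew skewK //.
by rewrite -morT_pu -raddfD /= pu_pl_skew.
Qed.

End ZlModule.

Definition mor_id (M : mackey) : mor M M :=
  @Mor M M id id (fun _ _ => erefl) (fun _ _ => erefl)
    (fun _ => erefl) (fun _ => erefl) (fun _ => erefl).

Lemma projective_ses_splits l (A B C : mackey) (i : mor A B) (p : mor B C) :
  is_Zl_module l B -> is_Zl_module l C -> is_projective l C ->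
  short_exact i p -> ses_splits i p.
Proof.
move=> B_mod C_mod C_proj [_ surj_p _ _].
by have [s s_sect] := C_proj B C B_mod C_mod p (mor_id C) surj_p; exists s.
Qed.

Theorem proposition3p5 (l : nat) (hl : prime l) (hodd : odd l) :
  (forall M : mackey, is_Zl_module l M ->
     exists (I J : eqType) (f : I -> mor (H_mackey l) M) (g : J -> mor (S_mackey l) M),
       is_dsum_H_S f g)
  /\ (forall M : mackey, is_Zl_module l M -> is_projective l M)
  /\ (forall (A B C : mackey) (i : mor A B) (p : mor B C),
        is_Zl_module l A -> is_Zl_module l B -> is_Zl_module l C ->
        short_exact i p -> ses_splits i p).
Proof.
split; first by move=> M; apply: Zl_module_dsum.
split; first by move=> M; apply: Zl_module_projective.
move=> A B C i p _ B_mod C_mod.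
exact: projective_ses_splits B_mod C_mod (Zl_module_projective hl hodd C_mod).
Qed.
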